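(* Let $a>3$ be irrational and $t$ a positive integer, and let $U$, $D$ be as follows: $U = \#\{(x,y)\in\mathbb{Z}^2 : x \ge 0,\ x + a y \ge t(a+3)/12,\ x + 3y \le t/2\}$ and $D = \#\{(x,y)\in\mathbb{Z}^2 : y \ge 0,\ x + 3y \ge t/2,\ x + a y \le t(a+3)/12\}$. Let $d(t) = \lceil t/12\rceil$ if $t$ is even and $d(t)=0$ if $t$ is odd. Then \[ L_{\mathcal{T}_{\frac{a+3}{12},\,\frac{a+3}{12a}}}(t) = L_{\mathcal{T}_{1/2,\,1/6}}(t) + D - U - d(t). \]
   Context: For $u,v>0$, $\mathcal{T}_{u,v}$ denotes the closed triangle with vertices $(0,0)$, $(u,0)$, $(0,v)$, and its Ehrhart function is $L_{\mathcal{T}_{u,v}}(t) = \#\left(\mathbb{Z}^2 \cap \mathcal{T}_{tu,tv}\right)$ for positive integers $t$. Here $d(t)$ equals the number of lattice points on the segment of the line $2x+6y=t$ with $0\le y<t/12$. *)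

From HB Require Import structures.
From mathcomp Require Import all_boot all_order all_algebra.
From mathcomp Require Import finmap.
From mathcomp Require Import boolp classical_sets cardinality reals.
Set Implicit Arguments. Unset Strict Implicit. Unset Printing Implicit Defensive.
Import Order.TTheory GRing.Theory Num.Theory.
Local Open Scope classical_set_scope.
Local Open Scope ring_scope.

(* Number of integer points in a set of lattice points (the sets used below are
   all finite; fset_set returns the empty fset on infinite sets). *)
Definition latcount (A : set (int * int)) : nat := #|` fset_set A|%fset.

Definition triangle (R : realType) (u v : R) : set (R * R) :=
  [set p | 0 <= p.1 /\ 0 <= p.2 /\ p.1 / u + p.2 / v <= 1].

(* Ehrhart function L_{T_{u,v}}(t) = #(Z^2 ∩ T_{tu,tv}). *)
Definition ehrhartT (R : realType) (u v : R) (t : nat) : nat :=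
  latcount [set z | triangle (t%:R * u) (t%:R * v) (z.1%:~R, z.2%:~R)].

Definition setU_ (R : realType) (a : R) (t : nat) : set (int * int) :=
  [set z | 0 <= z.1 /\
           t%:R * (a + 3) / 12 <= z.1%:~R + a * z.2%:~R :> R /\
           z.1%:~R + 3 * z.2%:~R <= t%:R / 2 :> R].

Definition setD_ (R : realType) (a : R) (t : nat) : set (int * int) :=
  [set z | 0 <= z.2 /\
           t%:R / 2 <= z.1%:~R + 3 * z.2%:~R :> R /\
           z.1%:~R + a * z.2%:~R <= t%:R * (a + 3) / 12 :> R].

Definition dfun (t : nat) : int :=
  if odd t then 0 else Num.ceil (t%:R / 12 : rat).

From HB Require Import structures.
From mathcomp Require Import all_boot all_order all_algebra.
From mathcomp Require Import finmap.
From mathcomp Require Import boolp classical_sets cardinality reals.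
From mathcomp Require Import zify ring lra.
Set Implicit Arguments. Unset Strict Implicit. Unset Printing Implicit Defensive.
Import Order.TTheory GRing.Theory Num.Theory.

(* Both dilated triangles t*T1 = {x,y >= 0, x + a y <= c} (c = t(a+3)/12) and
   t*T2 = {x,y >= 0, x + 3y <= t/2} have their slanted edges on lines through
   the common point (t/4, t/12); indeed
     (x + a y - c) - (x + 3y - t/2) = (a - 3)(y - t/12).
   Left of y = t/12 the edge of T1 lies under that of T2, right of it above.
   From this sign information one checks, point by point, the indicator
   identity  [T1] + [F] + [U] = [T2] + [D],  where F is the part of the edge
   x + 3y = t/2 with 0 <= y < t/12; the only delicate case, a lattice point
   on the edge of T1, forces y = t/12 because a is irrational.
   Summing the identity over a box of lattice points containing all five sets
   turns indicators into lattice-point counts, and F has d(t) lattice points. *)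

Lemma count_iota_lt (n K : nat) : count (fun j => j < K) (iota 0 n) = minn n K.
Proof.
elim: n => [|n IH]; first by rewrite min0n.
rewrite -addn1 iotaD count_cat IH /= add0n addn0; lia.
Qed.

Definition box (n : nat) : seq (int * int) :=
  [seq (Posz i, Posz j) | j <- iota 0 n, i <- iota 0 n].

Lemma box_uniq (n : nat) : uniq (box n).
Proof. by apply: allpairs_uniq; rewrite ?iota_uniq // => -[? ?] [? ?] _ _ [-> ->]. Qed.

Lemma mem_box (n : nat) (x y : int) :
  (0 <= x)%R -> (0 <= y)%R -> (x < n)%R -> (y < n)%R -> (x, y) \in box n.
Proof.
case: x => // x; case: y => // y _ _ hx hy.
by apply/allpairsP; exists (y, x); rewrite /= !mem_iota; split => //; lia.
Qed.

(* Lattice points in the box on the line 2x + 6y = t with 12y < t: one for each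
   y < t/12 when t is even, none when t is odd. *)
Lemma count_line_points (n t : nat) : t < n ->
  count (fun z : int * int => (2 * z.1 + 6 * z.2 == t) && (12 * z.2 < t))%R (box n)
  = ~~ odd t * ((t + 11) %/ 12).
Proof.
move=> t_lt_n; rewrite /box count_flatten -map_comp.
have row j : count (fun i => (2 * i + 6 * j == t) && (12 * j < t)) (iota 0 n)
             = (12 * j < t) && ~~ odd t.
  case: (boolP ((12 * j < t) && ~~ odd t)) => [/andP[jt ev]|nok].
    rewrite (eq_count (a2 := pred1 ((t - 6 * j) %/ 2))) => [|i /=]; last first.
      by apply/idP/eqP => [/andP[/eqP]|]; lia.
    by rewrite count_uniq_mem ?iota_uniq // mem_iota; lia.
  by rewrite (eq_count (a2 := pred0)) ?count_pred0 // => i /=; move: nok; lia.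
rewrite (eq_map (g := fun j => ((12 * j < t) && ~~ odd t : nat))) => [|j /=]; last first.
  rewrite count_map -row; apply: eq_count => i /=; congr andb; apply/eqP/eqP; lia.
rewrite sumn_count (eq_count (a2 := fun j => (j < (t + 11) %/ 12) && ~~ odd t)).
  case: (odd t) => /=.
    by rewrite (eq_count (a2 := pred0)) ?count_pred0 // => j; rewrite andbF.
  rewrite (eq_count (a2 := fun j => j < (t + 11) %/ 12)) => [|j]; last exact: andbT.
  rewrite count_iota_lt; lia.
by move=> j /=; congr andb; apply/idP/idP; lia.
Qed.

Lemma count_pointwise_sum (A : Type) (p1 p2 p3 q1 q2 : pred A) (s : seq A) :
  (forall z, (p1 z : nat) + p2 z + p3 z = q1 z + q2 z)%N ->
  (count p1 s + count p2 s + count p3 s = count q1 s + count q2 s)%N.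
Proof. by move=> pq; elim: s => //= z s IH; have := pq z; lia. Qed.

Local Open Scope classical_set_scope.
Local Open Scope ring_scope.

Section PointwiseIdentity.
Variables (R : realFieldType) (a T : R).
Hypotheses (a_gt3 : 3 < a) (T_gt0 : 0 < T).

(* Membership in t*T1, t*T2, U, D and F for a point (X, Y), with T playing the
   role of the dilation factor t. *)
Definition inT1 (X Y : R) := [&& 0 <= X, 0 <= Y & X + a * Y <= T * (a + 3) / 12].
Definition inT2 (X Y : R) := [&& 0 <= X, 0 <= Y & X + 3 * Y <= T / 2].
Definition inU (X Y : R) :=
  [&& 0 <= X, T * (a + 3) / 12 <= X + a * Y & X + 3 * Y <= T / 2].
Definition inD (X Y : R) :=
  [&& 0 <= Y, T / 2 <= X + 3 * Y & X + a * Y <= T * (a + 3) / 12].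
Definition onF (X Y : R) := [&& 0 <= Y, X + 3 * Y == T / 2 & 12 * Y < T].

Lemma lines_gap (X Y : R) :
  (X + a * Y - T * (a + 3) / 12) - (X + 3 * Y - T / 2) = (a - 3) * (Y - T / 12).
Proof. by field. Qed.

Lemma below_meet (X Y : R) : Y < T / 12 ->
  X + a * Y - T * (a + 3) / 12 < X + 3 * Y - T / 2.
Proof. by move=> Ylt; rewrite -subr_lt0 lines_gap pmulr_rlt0 ?subr_gt0 ?subr_lt0. Qed.

Lemma above_meet (X Y : R) : T / 12 < Y ->
  X + 3 * Y - T / 2 < X + a * Y - T * (a + 3) / 12.
Proof. by move=> Ygt; rewrite -subr_gt0 lines_gap pmulr_rgt0 ?subr_gt0. Qed.

Lemma indicator_identity (X Y : R) :
  (X + a * Y = T * (a + 3) / 12 -> Y = T / 12) ->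
  (inT1 X Y + onF X Y + inU X Y = inT2 X Y + inD X Y)%N.
Proof.
move=> meet; rewrite /inT1 /inT2 /inU /inD /onF.
have -> : (12 * Y < T) = (Y < T / 12) by apply/idP/idP => ?; lra.
have [Ylt|Ygt|Yeq] := ltrgtP Y (T / 12);
  [have gap := below_meet X Ylt | have gap := above_meet X Ygt |
   have gap : X + a * Y - T * (a + 3) / 12 = X + 3 * Y - T / 2
     by apply/eqP; rewrite -subr_eq0 lines_gap Yeq subrr mulr0].
all: case: (ltrgtP (X + a * Y) (T * (a + 3) / 12)) => hZ;
       last have Ymeet := meet hZ.
all: move: (a * Y) gap hZ => Z gap hZ.
all: case: (lerP 0 X) => ?; case: (lerP 0 Y) => ?;
     case: (ltrgtP (X + 3 * Y) (T / 2)) => ? //; exfalso; lra.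
Qed.

(* All five sets lie in the square [0, c + T]^2; lra only reads the local
   context, hence the copies of the section hypotheses. *)
Lemma five_sets_bounded (X Y : R) :
  [|| inT1 X Y, onF X Y, inU X Y, inT2 X Y | inD X Y] ->
  [&& 0 <= X, X <= T * (a + 3) / 12 + T, 0 <= Y & Y <= T * (a + 3) / 12 + T].
Proof.
have a3 := a_gt3; have T0 := T_gt0.
have c_ge0 : 0 <= T * (a + 3) / 12.
  by rewrite divr_ge0 // mulr_ge0 // ?ltW //; lra.
have aY_ge (Y0 : 0 <= Y) : Y <= a * Y by rewrite ler_peMl //; lra.
rewrite /inT1 /onF /inU /inT2 /inD.
case/or4P => [|||/orP[]] /and3P[h1 h2 h3]; apply/and4P.
- by have := aY_ge h2; split; lra.
- by move/eqP: h2 => h2; split; lra.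
- have [/(below_meet X)|Yge] := ltP Y (T / 12); first lra.
  by split; lra.
- by split; lra.
- have [Yle|/(above_meet X)] := leP Y (T / 12); last lra.
  by have := aY_ge h1; split; lra.
Qed.
End PointwiseIdentity.

Lemma latcount_count (A : set (int * int)) (b : pred (int * int)) (s : seq (int * int)) :
  uniq s -> (forall z, A z <-> b z) -> (forall z, b z -> z \in s) ->
  latcount A = count b s.
Proof.
move=> s_uniq Ab bs.
have A_fin : finite_set A by apply: (sub_finite_set _ (finite_seq s)) => z /Ab /bs.
rewrite /latcount -size_filter; apply/perm_size/uniq_perm; rewrite ?filter_uniq //.
move=> z; rewrite mem_filter in_fset_set //.
apply/idP/andP => [/set_mem/Ab bz | [bz _]]; last by apply/mem_set/Ab.
by split; last exact: bs.
Qed.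

Lemma dfunE (t : nat) : dfun t = (~~ odd t * ((t + 11) %/ 12))%N.
Proof.
rewrite /dfun; case: (odd t) => //=; rewrite mul1n; apply: ceil_def.
have up : t%:R <= 12 * ((t + 11) %/ 12)%:R :> rat by rewrite -natrM ler_nat; lia.
have low : 12 * ((t + 11) %/ 12)%:R < t%:R + 12 :> rat.
  by rewrite -natrM -natrD ltr_nat; lia.
by rewrite intrB /= !pmulrn; apply/andP; split; lra.
Qed.

Lemma triangle_halfplaneE (R : realType) (c k T X Y : R) :
  0 < c -> 0 < k -> 0 < T ->
  triangle (T * c) (T * (c / k)) (X, Y) <-> [/\ 0 <= X, 0 <= Y & X + k * Y <= T * c].
Proof.
move=> c_gt0 k_gt0 T_gt0; rewrite /triangle /=.
have -> : X / (T * c) + Y / (T * (c / k)) = (X + k * Y) / (T * c).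
  by field; rewrite !gt_eqF.
rewrite ler_pdivrMr ?mulr_gt0 // mul1r.
by split => [[? [? ?]] | [? ? ?]].
Qed.

Lemma irrational_int_relation (R : realType) (a : R) (m k : int) :
  irrational a -> m%:~R * a = k%:~R -> m = 0.
Proof.
move=> a_irr mak; have [// | m_neq0] := eqVneq m 0.
exfalso; apply: a_irr; exists (k%:~R / m%:~R) => //.
by rewrite fmorph_div /= !ratr_int -mak mulrC mulKf // intr_eq0.
Qed.

Lemma lines_meet_on_lattice (R : realType) (a : R) (t : nat) (x y : int) :
  irrational a -> x%:~R + a * y%:~R = t%:R * (a + 3) / 12 -> y%:~R = t%:R / 12 :> R.
Proof.
move=> a_irr on_line.
have rel : (12 * y - t%:Z)%:~R * a = (3 * t%:Z - 12 * x)%:~R :> R.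
  rewrite !(intrB, intrM) /= !pmulrn; lra.
have /eqP := irrational_int_relation a_irr rel.
rewrite subr_eq0 => /eqP/(congr1 (fun z : int => z%:~R : R)).
rewrite intrM /= pmulrn => y12; lra.
Qed.

Definition onLattice (R : realType) (p : R -> R -> bool) : pred (int * int) :=
  fun z => p z.1%:~R z.2%:~R.

Section LatticeCounts.
Variables (R : realType) (a : R) (t n : nat).
Hypotheses (a_gt3 : 3 < a) (a_irr : irrational a) (t_gt0 : (0 < t)%N)
           (n_large : t%:R * (a + 3) / 12 + t%:R < n%:R).
Local Notation T := (t%:R : R).

Let T_gt0 : 0 < T. Proof. by rewrite ltr0n. Qed.

Lemma box_covers (z : int * int) :
  [|| onLattice (inT1 a T) z, onLattice (onF T) z, onLattice (inU a T) z,
      onLattice (inT2 T) z | onLattice (inD a T) z] -> z \in box n.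
Proof.
case: z => x y /(five_sets_bounded a_gt3 T_gt0) /and4P[x_ge0 x_le y_ge0 y_le].
by apply: mem_box; rewrite -?(ler0z R) -?(ltr_int R) //=; have := n_large; lra.
Qed.

Lemma count_inT1 :
  ehrhartT ((a + 3) / 12) ((a + 3) / (12 * a)) t = count (onLattice (inT1 a T)) (box n).
Proof.
apply: latcount_count => [|z|z hz]; rewrite ?box_uniq //; last first.
  by apply: box_covers; rewrite hz.
have a_gt0 : 0 < a by have := a_gt3; lra.
have c_gt0 : 0 < (a + 3) / 12 by have := a_gt3; rewrite divr_gt0 //; lra.
have -> : (a + 3) / (12 * a) = (a + 3) / 12 / a by rewrite invfM mulrA.
rewrite /= triangle_halfplaneE // mulrA /onLattice /inT1.
by split => [[-> -> ->] | /and3P[]].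
Qed.

Lemma count_inT2 : ehrhartT (1 / 2 : R) (1 / 6) t = count (onLattice (inT2 T)) (box n).
Proof.
apply: latcount_count => [|z|z hz]; rewrite ?box_uniq //; last first.
  by apply: box_covers; rewrite hz !orbT.
have -> : (1 / 6 : R) = 1 / 2 / 3 by field.
rewrite /= triangle_halfplaneE ?divr_gt0 // mul1r /onLattice /inT2.
by split => [[-> -> ->] | /and3P[]].
Qed.

Lemma count_inU : latcount (setU_ a t) = count (onLattice (inU a T)) (box n).
Proof.
apply: latcount_count => [|z|z hz]; rewrite ?box_uniq //; last first.
  by apply: box_covers; rewrite hz !orbT.
rewrite /setU_ /onLattice /inU /= ler0z.
by split => [[-> [-> ->]] | /and3P[]].
Qed.

Lemma count_inD : latcount (setD_ a t) = count (onLattice (inD a T)) (box n).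
Proof.
apply: latcount_count => [|z|z hz]; rewrite ?box_uniq //; last first.
  by apply: box_covers; rewrite hz !orbT.
rewrite /setD_ /onLattice /inD /= ler0z.
by split => [[-> [-> ->]] | /and3P[]].
Qed.

Lemma count_onF : count (onLattice (onF T)) (box n) = (~~ odd t * ((t + 11) %/ 12))%N.
Proof.
have t_lt_n : (t < n)%N.
  have c_ge0 : 0 <= T * (a + 3) / 12.
    by rewrite divr_ge0 // mulr_ge0 //; have := a_gt3; lra.
  by rewrite -(ltr_nat R); have := n_large; lra.
rewrite -(count_line_points t_lt_n); apply: eq_in_count => _ /allpairsP[[j i] [_ _ ->]].
rewrite /onLattice /onF /= ler0z /=.
congr andb; first by rewrite -(eqr_int R) !(intrD, intrM) /= !pmulrn; apply/eqP/eqP; lra.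
by rewrite -(ltr_int R) intrM /= !pmulrn.
Qed.

Lemma count_identity :
  (count (onLattice (inT1 a T)) (box n) + count (onLattice (onF T)) (box n)
   + count (onLattice (inU a T)) (box n)
  = count (onLattice (inT2 T)) (box n) + count (onLattice (inD a T)) (box n))%N.
Proof.
apply: count_pointwise_sum => z; apply: indicator_identity => //.
exact: lines_meet_on_lattice.
Qed.
End LatticeCounts.

Theorem mainTheorem14 (R : realType) (a : R) (t : nat) :
  3 < a -> irrational a -> (0 < t)%N ->
  (ehrhartT ((a + 3) / 12) ((a + 3) / (12 * a)) t)%:Z =
  (ehrhartT (1 / 2 : R) (1 / 6) t)%:Z
    + (latcount (setD_ a t))%:Z - (latcount (setU_ a t))%:Z - dfun t.
Proof.
move=> a_gt3 a_irr t_gt0.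
pose n := Num.bound (t%:R * (a + 3) / 12 + t%:R : R).
have n_large : t%:R * (a + 3) / 12 + t%:R < n%:R :> R.
  by apply: archi_boundP; rewrite addr_ge0 // divr_ge0 // mulr_ge0 //; lra.
have := count_identity t n a_gt3 a_irr.
rewrite (count_inT1 a_gt3 t_gt0 n_large) (count_inT2 a_gt3 t_gt0 n_large).
rewrite (count_inU a_gt3 t_gt0 n_large) (count_inD a_gt3 t_gt0 n_large).
rewrite (count_onF a_gt3 n_large) dfunE; lia.
Qed.
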